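(* Let $m$ be a positive integer, $\gamma\in C^m(\mathbb{R},\mathbb{R}^3)$, and $K\subseteq\mathbb{R}$ a compact set containing at least $m+1$ points. If $\gamma$ satisfies the $A/V$ condition on $K$, then $$\lim_{\substack{\operatorname{diam}X\to0\\ a,b\in X\subseteq K,\ a<b\\ \#X=m+1}}\left|\frac{A(\gamma;a,b)}{V(\gamma;a,b)}-\frac{A[X,\gamma;a,b]}{V[X,\gamma;a,b]}\right|=0,$$ i.e. for every $\varepsilon>0$ there is $\delta>0$ such that the displayed difference is $<\varepsilon$ for all $X\subseteq K$ with $\#X=m+1$, $\operatorname{diam}X<\delta$, and $a,b\in X$ with $a<b$. In particular, $\gamma$ satisfies the discrete $A/V$ condition on $K$.
   Context: $C^m(\mathbb{R},\mathbb{R}^3)$: curves whose components are $m$-times continuously differentiable with bounded $m$th derivative. For $\gamma=(f,g,h)$ and $a\in\mathbb{R}$, $T_af(x)=\sum_{k=0}^m\frac{f^{(k)}(a)}{k!}(x-a)^k$ (similarly $T_ag$); $A(\gamma;a,b)= h(b)-h(a)-2\int_a^b\big((T_af)'T_ag-(T_ag)'T_af\big) + 2f(a)(g(b)-T_ag(b)) - 2g(a)(f(b)-T_af(b))$, $V(\gamma;a,b)=(b-a)^{2m}+(b-a)^m\int_a^b(|(T_af)'|+|(T_ag)'|)$. $\gamma$ satisfies the $A/V$ condition on $E$ if for every $\varepsilon>0$ there is $\delta>0$ with $|A(\gamma;a,b)/V(\gamma;a,b)|<\varepsilon$ for all $a,b\in E$ with $0<b-a<\delta$. For $X$ a set of $m+1$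 distinct points, $P(X;\phi)$ is the unique polynomial of degree $\le m$ agreeing with $\phi$ on $X$; $P_f=P(X;f)$, $P_g=P(X;g)$, and for $a,b\in X$: $A[X,\gamma;a,b]=h(b)-h(a)-2\int_a^b(P_f'P_g-P_g'P_f)$, $V[X,\gamma;a,b]=\operatorname{diam}(X)^{2m}+\operatorname{diam}(X)^m\int_a^b(|P_f'|+|P_g'|)$. $\gamma$ satisfies the discrete $A/V$ condition on $E$ if for every $\varepsilon>0$ there is $\delta>0$ such that $|A[X,\gamma;a,b]/V[X,\gamma;a,b]|<\varepsilon$ for all $X\subseteq E$ with $\#X=m+1$, $\operatorname{diam}X<\delta$, and $a,b\in X$ with $a<b$. *)

From Stdlib Require Import Reals List ClassicalEpsilon.
From Coquelicot Require Import Coquelicot.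
Open Scope R_scope.

Definition Cm (m : nat) (f : R -> R) : Prop :=
  (forall k x, (k <= m)%nat -> ex_derive_n f k x) /\
  (forall k x, (k <= m)%nat -> continuous (Derive_n f k) x) /\
  (exists M, forall x, Rabs (Derive_n f m x) <= M).

Definition Taylor (m : nat) (f : R -> R) (a : R) (x : R) : R :=
  sum_f_R0 (fun k => Derive_n f k a / INR (Factorial.fact k) * (x - a) ^ k) m.

(* A(gamma; a, b) for gamma = (f, g, h) *)
Definition Acont (m : nat) (f g h : R -> R) (a b : R) : R :=
  h b - h a
  - 2 * RInt (fun x => Derive (Taylor m f a) x * Taylor m g a x
                       - Derive (Taylor m g a) x * Taylor m f a x) a b
  + 2 * f a * (g b - Taylor m g a b) - 2 * g a * (f b - Taylor m f a b).

Definition Vcont (m : nat) (f g : R -> R) (a b : R) : R :=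
  (b - a) ^ (2 * m)
  + (b - a) ^ m * RInt (fun x => Rabs (Derive (Taylor m f a) x)
                                + Rabs (Derive (Taylor m g a) x)) a b.

Definition AV_condition (m : nat) (f g h : R -> R) (E : R -> Prop) : Prop :=
  forall eps, 0 < eps -> exists delta, 0 < delta /\
    forall a b, E a -> E b -> 0 < b - a < delta ->
      Rabs (Acont m f g h a b / Vcont m f g a b) < eps.

(* Finite sets X are represented by duplicate-free lists.
   Polynomial of degree <= m with coefficients c. *)
Definition polyeval (m : nat) (c : nat -> R) (x : R) : R :=
  sum_f_R0 (fun k => c k * x ^ k) m.

(* P(X; phi): the (unique, when X has m+1 distinct points) polynomial of
   degree <= m agreeing with phi on X. *)
Definition interp (m : nat) (X : list R) (phi : R -> R) : R -> R :=
  polyeval m (epsilon (inhabits (fun _ : nat => 0))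
                (fun c => forall x, List.In x X -> polyeval m c x = phi x)).

Definition diam (X : list R) : R :=
  fold_right Rmax 0 (map (fun x => fold_right Rmax 0 (map (fun y => Rabs (x - y)) X)) X).

Definition Adisc (m : nat) (X : list R) (f g h : R -> R) (a b : R) : R :=
  h b - h a
  - 2 * RInt (fun x => Derive (interp m X f) x * interp m X g x
                       - Derive (interp m X g) x * interp m X f x) a b.

Definition Vdisc (m : nat) (X : list R) (f g : R -> R) (a b : R) : R :=
  diam X ^ (2 * m)
  + diam X ^ m * RInt (fun x => Rabs (Derive (interp m X f) x)
                               + Rabs (Derive (interp m X g) x)) a b.

Definition discrete_AV_condition (m : nat) (f g h : R -> R) (E : R -> Prop) : Prop :=
  forall eps, 0 < eps -> exists delta, 0 < delta /\
    forall X : list R, NoDup X -> length X = S m -> List.Forall E X -> diam X < delta ->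
      forall a b, List.In a X -> List.In b X -> a < b ->
        Rabs (Adisc m X f g h a b / Vdisc m X f g a b) < eps.

(* Both A(gamma; a, b) and A[X, gamma; a, b] are perturbations of the exact quantity
   h(b) - h(a) - 2 int_a^b (f'g - g'f).  On [a, b] the Taylor polynomials at a and the
   interpolation polynomials on X approximate f, g to within w (2 diam X)^m and their
   derivatives to within w (2 diam X)^(m-1), where w bounds the oscillation of the m-th
   derivatives on [a - diam X, a + diam X]; for the interpolants this comes from iterating
   Rolle's theorem on the m+1 zeros of f - P(X; f).  An integration by parts then shows that
   A(gamma; a, b) - A[X, gamma; a, b] = O(w V[X, gamma; a, b]) and
   V(gamma; a, b) = O(V[X, gamma; a, b]).  By uniform continuity w -> 0 as diam X -> 0, and
   A/V -> 0 by hypothesis, so the two quotients merge; the discrete A/V condition follows by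
   the triangle inequality. *)

From Pilot Require Import Defs.
From Stdlib Require Import Reals List Sorting Lra Lia ClassicalEpsilon.
From Coquelicot Require Import Coquelicot.
Open Scope R_scope.

Definition C0 (F : R -> R) : Prop := forall x, continuous F x.

Definition C1 (F : R -> R) : Prop :=
  forall x, ex_derive F x /\ continuous (Derive F) x.

Lemma C0_plus F G : C0 F -> C0 G -> C0 (fun x => F x + G x).
Proof. intros HF HG x. exact (continuous_plus F G x (HF x) (HG x)). Qed.

Lemma C0_minus F G : C0 F -> C0 G -> C0 (fun x => F x - G x).
Proof. intros HF HG x. exact (continuous_minus F G x (HF x) (HG x)). Qed.

Lemma C0_mult F G : C0 F -> C0 G -> C0 (fun x => F x * G x).
Proof. intros HF HG x. exact (continuous_mult F G x (HF x) (HG x)). Qed.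

Lemma C0_const c : C0 (fun _ => c).
Proof. intros x. apply continuous_const. Qed.

Lemma C0_abs F : C0 F -> C0 (fun x => Rabs (F x)).
Proof. intros HF x. apply (continuous_comp F Rabs); [apply HF | apply continuous_Rabs]. Qed.

Lemma C1_C0 F : C1 F -> C0 F.
Proof. intros HF x. apply (@ex_derive_continuous R_AbsRing R_NormedModule), HF. Qed.

Lemma C1_C0_Derive F : C1 F -> C0 (Derive F).
Proof. intros HF x. apply HF. Qed.

Lemma C1_is_derive F x : C1 F -> is_derive F x (Derive F x).
Proof. intros HF. apply Derive_correct, HF. Qed.

Lemma Cm_is_derive_n m f j x : Cm m f -> (j < m)%nat ->
  is_derive (Derive_n f j) x (Derive_n f (S j) x).
Proof. intros [Hd _] Hj. apply Derive_correct, (Hd (S j) x Hj). Qed.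

Lemma Cm_C1 m f : (0 < m)%nat -> Cm m f -> C1 f.
Proof. intros Hm [Hd [Hc _]] x. split; [apply (Hd 1%nat x Hm) | apply (Hc 1%nat x Hm)]. Qed.

(* Dispatch on the syntax of the integrand: letting [apply] search instead makes the
   unifier unfold the real-number operations, which is prohibitively slow. *)
Ltac C0_tac :=
  repeat match goal with
  | |- C0 (fun x => _ - _) => apply C0_minus
  | |- C0 (fun x => _ + _) => apply C0_plus
  | |- C0 (fun x => _ * _) => apply C0_mult
  | |- C0 (fun x => Rabs _) => apply C0_abs
  | |- C0 (fun _ => ?c) => apply C0_const
  | |- C0 (fun x => ?F x) => change (C0 F)
  | |- C0 (Derive ?F) => apply C1_C0_Derive; assumption
  | |- C0 ?F => apply C1_C0; assumption
  end.

(** * Polynomials *)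

Definition poly_about (n : nat) (c : nat -> R) (a x : R) : R :=
  sum_f_R0 (fun k => c k * (x - a) ^ k) n.

Definition coef_deriv (c : nat -> R) (k : nat) : R := INR (S k) * c (S k).

Lemma is_derive_poly_about n c a x :
  is_derive (poly_about (S n) c a) x (poly_about n (coef_deriv c) a x).
Proof.
  induction n as [|n IH].
  - unfold poly_about, coef_deriv; simpl. auto_derive; auto. ring.
  - apply is_derive_ext with
      (fun t => poly_about (S n) c a t + c (S (S n)) * (t - a) ^ S (S n)); [reflexivity|].
    replace (poly_about (S n) (coef_deriv c) a x) with
      (poly_about n (coef_deriv c) a x + c (S (S n)) * (INR (S (S n)) * (x - a) ^ S n))
      by (unfold poly_about, coef_deriv; simpl; ring).
    apply (is_derive_plus (poly_about (S n) c a)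
             (fun t => c (S (S n)) * (t - a) ^ S (S n))); [exact IH|].
    auto_derive; auto. rewrite Rmult_1_l. reflexivity.
Qed.

Lemma poly_about_C0 n c a : C0 (poly_about n c a).
Proof.
  intros x. destruct n as [|n].
  - apply continuous_ext with (fun _ => c O); [intros t; unfold poly_about; simpl; ring|].
    apply continuous_const.
  - apply (@ex_derive_continuous R_AbsRing R_NormedModule).
    eexists. apply is_derive_poly_about.
Qed.

Lemma poly_about_center n c a : poly_about n c a a = c O.
Proof.
  induction n as [|n IH]; unfold poly_about in *; simpl; [ring|].
  rewrite IH, Rminus_diag. simpl. ring.
Qed.

Lemma Derive_n_poly_about j n c a x : (j <= n)%nat ->
  Derive_n (poly_about n c a) j x = poly_about (n - j) (Nat.iter j coef_deriv c) a x.
Proof.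
  revert x. induction j as [|j IH]; intros x Hj.
  - simpl. now rewrite Nat.sub_0_r.
  - simpl Derive_n. rewrite (Derive_ext _ _ x (fun t => IH t ltac:(lia))).
    replace (n - j)%nat with (S (n - S j)) by lia.
    apply is_derive_unique, is_derive_poly_about.
Qed.

Lemma iter_coef_deriv j c k : Nat.iter j coef_deriv c k =
  c (k + j)%nat * INR (Factorial.fact (k + j)) / INR (Factorial.fact k).
Proof.
  revert k. induction j as [|j IH]; intros k.
  - rewrite Nat.add_0_r. simpl. field. apply INR_fact_neq_0.
  - simpl Nat.iter. unfold coef_deriv at 1. rewrite IH.
    replace (S k + j)%nat with (k + S j)%nat by lia.
    change (Factorial.fact (S k)) with (S k * Factorial.fact k)%nat. rewrite mult_INR.
    field. split; [apply INR_fact_neq_0 | apply not_0_INR; lia].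
Qed.

Definition is_poly (n : nat) (p : R -> R) : Prop :=
  exists c a, forall x, p x = poly_about n c a x.

Section IsPoly.

Variables (n : nat) (p : R -> R).
Hypothesis Hp : is_poly n p.

Lemma is_poly_Derive_n :
  exists c a, forall j x, (j <= n)%nat ->
    Derive_n p j x = poly_about (n - j) (Nat.iter j coef_deriv c) a x.
Proof.
  destruct Hp as [c [a E]]. exists c, a. intros j x Hj.
  rewrite (Derive_n_ext _ _ j x E). now apply Derive_n_poly_about.
Qed.

Lemma is_poly_is_derive_n j x : (j < n)%nat ->
  is_derive (Derive_n p j) x (Derive_n p (S j) x).
Proof.
  intros Hj. destruct is_poly_Derive_n as [c [a E]].
  rewrite E by lia.
  apply is_derive_ext with (poly_about (n - j) (Nat.iter j coef_deriv c) a);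
    [intros t; rewrite E by lia; reflexivity|].
  replace (n - j)%nat with (S (n - S j)) by lia. apply is_derive_poly_about.
Qed.

Lemma is_poly_Derive_n_const x y : Derive_n p n x = Derive_n p n y.
Proof.
  destruct is_poly_Derive_n as [c [a E]].
  rewrite !E, Nat.sub_diag by lia. reflexivity.
Qed.

Lemma is_poly_C1 : (0 < n)%nat -> C1 p.
Proof.
  intros Hn x. destruct is_poly_Derive_n as [c [a E]]. split.
  - eexists. apply (is_poly_is_derive_n O x Hn).
  - apply continuous_ext with (poly_about (n - 1) (Nat.iter 1 coef_deriv c) a);
      [intros t; symmetry; apply (E 1%nat t Hn)|].
    apply poly_about_C0.
Qed.

End IsPoly.

Lemma Taylor_is_poly m f a : is_poly m (Taylor m f a).
Proof. exists (fun k => Derive_n f k a / INR (Factorial.fact k)), a. reflexivity. Qed.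

Lemma Derive_n_Taylor_center m f a j : (j <= m)%nat ->
  Derive_n (Taylor m f a) j a = Derive_n f j a.
Proof.
  intros Hj.
  change (Taylor m f a) with
    (poly_about m (fun k => Derive_n f k a / INR (Factorial.fact k)) a).
  rewrite (Derive_n_poly_about j m (fun k => Derive_n f k a / INR (Factorial.fact k)) a a Hj).
  rewrite poly_about_center, iter_coef_deriv. simpl. field. apply INR_fact_neq_0.
Qed.

Lemma Taylor_center m f a : Taylor m f a a = f a.
Proof. exact (Derive_n_Taylor_center m f a O (Nat.le_0_l m)). Qed.

Lemma interp_is_poly m X phi : is_poly m (Defs.interp m X phi).
Proof.
  exists (epsilon (inhabits (fun _ : nat => 0))
            (fun c => forall x, In x X -> polyeval m c x = phi x)), 0.
  intros x. apply sum_eq. intros k _. now rewrite Rminus_0_r.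
Qed.

(** * Interpolation *)

Definition is_polyeval (n : nat) (p : R -> R) : Prop :=
  exists c, forall x, p x = polyeval n c x.

Lemma is_polyeval_widen n n' p : (n <= n')%nat -> is_polyeval n p -> is_polyeval n' p.
Proof.
  intros Hn [c Hc]. exists (fun k => if (k <=? n)%nat then c k else 0).
  intros x. rewrite Hc. replace n' with (n + (n' - n))%nat by lia.
  induction (n' - n)%nat as [|d IH]; unfold polyeval in *.
  - rewrite Nat.add_0_r. apply sum_eq. intros i Hi.
    destruct (Nat.leb_spec i n); [reflexivity | lia].
  - rewrite Nat.add_succ_r, tech5, <- IH.
    destruct (Nat.leb_spec (S (n + d)) n); [lia|]. ring.
Qed.

Lemma is_polyeval_plus n p q :
  is_polyeval n p -> is_polyeval n q -> is_polyeval n (fun t => p t + q t).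
Proof.
  intros [c Hc] [d Hd]. exists (fun k => c k + d k). intros x.
  rewrite Hc, Hd. unfold polyeval. rewrite <- sum_plus. apply sum_eq. intros; ring.
Qed.

Lemma is_polyeval_scal n p r : is_polyeval n p -> is_polyeval n (fun t => r * p t).
Proof.
  intros [c Hc]. exists (fun k => r * c k). intros x.
  rewrite Hc. unfold polyeval. rewrite scal_sum. apply sum_eq. intros; ring.
Qed.

Lemma is_polyeval_mul_root n p y :
  is_polyeval n p -> is_polyeval (S n) (fun t => (t - y) * p t).
Proof.
  intros Hp.
  assert (HX : is_polyeval (S n) (fun t => t * p t)).
  { destruct Hp as [c Hc]. exists (fun k => match k with O => 0 | S k' => c k' end).
    intros x. rewrite Hc. unfold polyeval.
    rewrite (decomp_sum _ (S n)), scal_sum by lia. simpl.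
    rewrite Rmult_0_l, Rplus_0_l. apply sum_eq. intros; ring. }
  destruct (is_polyeval_plus _ _ _ HX
              (is_polyeval_widen n (S n) _ (Nat.le_succ_diag_r n)
                 (is_polyeval_scal n p (- y) Hp))) as [c Hc].
  exists c. intros x. rewrite <- Hc. ring.
Qed.

Definition node_poly (l : list R) (t : R) : R :=
  fold_right (fun y acc => (t - y) * acc) 1 l.

Lemma node_poly_is_polyeval l : is_polyeval (length l) (node_poly l).
Proof.
  induction l as [|y l IH].
  - exists (fun _ => 1). intros x. unfold polyeval. simpl. ring.
  - apply (is_polyeval_mul_root _ (node_poly l)), IH.
Qed.

Lemma node_poly_root l y : In y l -> node_poly l y = 0.
Proof.
  induction l as [|z l IH]; simpl; [tauto|].
  intros [->|Hy]; [ring | rewrite IH by exact Hy; ring].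
Qed.

Lemma node_poly_neq0 l x : ~ In x l -> node_poly l x <> 0.
Proof.
  induction l as [|z l IH]; simpl; intros Hx; [lra|].
  apply Rmult_integral_contrapositive. split; [intros E; apply Hx; left; lra|].
  apply IH. tauto.
Qed.

(* Newton's construction: correct the interpolant on [l] by a multiple of [node_poly l]. *)
Lemma polyeval_interpolation (phi : R -> R) l n : NoDup l -> (length l <= S n)%nat ->
  exists c, forall x, In x l -> polyeval n c x = phi x.
Proof.
  induction l as [|x l IH]; intros Hl Hn; [exists (fun _ => 0); intros ? []|].
  apply NoDup_cons_iff in Hl as [Hx Hl]. simpl in Hn.
  destruct (IH Hl ltac:(lia)) as [c Hc].
  set (r := (phi x - polyeval n c x) / node_poly l x).
  destruct (is_polyeval_plus n (polyeval n c) (fun t => r * node_poly l t))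
    as [d Hd]; [exists c; reflexivity | |].
  { apply is_polyeval_scal, (is_polyeval_widen (length l)); [lia|].
    apply node_poly_is_polyeval. }
  exists d. intros y Hy. rewrite <- Hd. destruct Hy as [<-|Hy].
  - unfold r. field. now apply node_poly_neq0.
  - rewrite node_poly_root, Hc by exact Hy. ring.
Qed.

Lemma interp_agrees m X phi : NoDup X -> length X = S m ->
  forall x, In x X -> Defs.interp m X phi x = phi x.
Proof.
  intros HX Hlen. unfold Defs.interp.
  apply (epsilon_spec (inhabits (fun _ : nat => 0))
           (fun c => forall x, In x X -> polyeval m c x = phi x)).
  apply polyeval_interpolation; [exact HX | lia].
Qed.

(** * Iterated Rolle theorem and polynomial approximation *)

Lemma StronglySorted_insert (x : R) l : StronglySorted Rlt l -> ~ In x l ->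
  exists l', StronglySorted Rlt l' /\ length l' = S (length l) /\
             (forall y, In y l' -> y = x \/ In y l).
Proof.
  induction l as [|y l IH]; intros Hs Hx.
  - exists (x :: nil). split; [repeat constructor | split; [reflexivity | intros z [<-|[]]; auto]].
  - apply StronglySorted_inv in Hs as [Hs Hy].
    destruct (Rlt_dec x y) as [Hxy|Hxy].
    + exists (x :: y :: l). repeat split; [|intros z [<-|Hz]; auto].
      constructor; [constructor; assumption|].
      constructor; [exact Hxy|]. eapply Forall_impl; [|exact Hy]. intros z Hz; lra.
    + assert (y < x) by (destruct (Req_dec x y); [subst; simpl in Hx; tauto | lra]).
      destruct (IH Hs (fun H => Hx (or_intror H))) as [l' [Hs' [Hlen Hin]]].
      exists (y :: l'). repeat split; [| simpl; lia |].
      * constructor; [exact Hs'|]. apply Forall_forall. intros z Hz.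
        destruct (Hin z Hz) as [->|Hz']; [assumption|].
        now apply (proj1 (Forall_forall _ _) Hy).
      * intros z [<-|Hz]; [simpl; auto|]. destruct (Hin z Hz); simpl; auto.
Qed.

Lemma NoDup_sorted_exists l : NoDup l ->
  exists l', StronglySorted Rlt l' /\ length l' = length l /\ incl l' l.
Proof.
  induction l as [|x l IH]; intros Hl.
  - exists nil. repeat constructor. intros ? [].
  - apply NoDup_cons_iff in Hl as [Hx Hl].
    destruct (IH Hl) as [l' [Hs [Hlen Hincl]]].
    destruct (StronglySorted_insert x l' Hs (fun H => Hx (Hincl x H)))
      as [l'' [Hs' [Hlen' Hin]]].
    exists l''. repeat split; [exact Hs' | simpl; lia |].
    intros y Hy. destruct (Hin y Hy) as [->|H]; [left | right; apply Hincl]; auto.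
Qed.

Lemma Rolle_sorted_zeros (F F' : R -> R) : (forall x, is_derive F x (F' x)) ->
  forall l lo hi, StronglySorted Rlt l ->
  List.Forall (fun y => lo <= y <= hi /\ F y = 0) l ->
  exists l', StronglySorted Rlt l' /\ length l' = pred (length l) /\
             List.Forall (fun y => lo <= y <= hi /\ F' y = 0) l'.
Proof.
  intros HF. induction l as [|x [|y l] IH]; intros lo hi Hs Hz;
    try (exists nil; repeat constructor; fail).
  apply StronglySorted_inv in Hs as [Hs Hx].
  destruct (StronglySorted_inv Hs) as [_ Hy].
  rewrite Forall_forall in Hx, Hy, Hz.
  destruct (IH y hi Hs) as [l' [Hs' [Hlen Hz']]].
  { apply Forall_forall. intros z Hin.
    destruct (Hz z (or_intror Hin)) as [[_ Hzh] Hz0]. repeat split; try assumption.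
    destruct Hin as [<-|Hin]; [lra | apply Rlt_le, Hy, Hin]. }
  assert (Hxy : x < y) by (apply Hx; left; reflexivity).
  destruct (MVT_cor2 F F' x y Hxy) as [c [Hc Hxcy]];
    [intros c _; apply is_derive_Reals, HF|].
  assert (Hc0 : F' c = 0).
  { rewrite (proj2 (Hz x (or_introl eq_refl))),
            (proj2 (Hz y (or_intror (or_introl eq_refl)))) in Hc.
    nra. }
  assert (Hlo : lo <= x) by apply (Hz x (or_introl eq_refl)).
  assert (Hhi : y <= hi) by apply (Hz y (or_intror (or_introl eq_refl))).
  exists (c :: l'). repeat split; [| simpl in *; lia |].
  - constructor; [exact Hs'|]. eapply Forall_impl; [|exact Hz']. simpl; intros; lra.
  - constructor; [split; [lra | exact Hc0]|]. eapply Forall_impl; [|exact Hz'].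
    simpl; intros; lra.
Qed.

Definition osc_le (F : R -> R) (lo hi w : R) : Prop :=
  forall x y, lo <= x <= hi -> lo <= y <= hi -> Rabs (F x - F y) <= w.

Lemma osc_le_sub F lo hi lo' hi' w : lo <= lo' -> hi' <= hi ->
  osc_le F lo hi w -> osc_le F lo' hi' w.
Proof. intros Hlo Hhi H x y Hx Hy. apply H; lra. Qed.

Section DerivativeChain.

Variables (m : nat) (Phi : nat -> R -> R) (lo hi : R).
Hypothesis HPhi : forall j x, (j < m)%nat -> is_derive (Phi j) x (Phi (S j) x).

Lemma deriv_chain_zeros l : StronglySorted Rlt l -> length l = S m ->
  List.Forall (fun y => lo <= y <= hi /\ Phi O y = 0) l ->
  forall j, (j <= m)%nat -> exists z, lo <= z <= hi /\ Phi j z = 0.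
Proof.
  intros Hs Hlen Hz.
  assert (Hl : forall j, (j <= m)%nat -> exists l', StronglySorted Rlt l' /\
             length l' = (S m - j)%nat /\
             List.Forall (fun y => lo <= y <= hi /\ Phi j y = 0) l').
  { induction j as [|j IH]; intros Hj; [exists l; rewrite Hlen; auto|].
    destruct (IH ltac:(lia)) as [l' [Hs' [Hlen' Hz']]].
    destruct (Rolle_sorted_zeros (Phi j) (Phi (S j)) (fun x => HPhi j x ltac:(lia))
                l' lo hi Hs' Hz') as [l'' [Hs'' [Hlen'' Hz'']]].
    exists l''. repeat split; [exact Hs'' | lia | exact Hz'']. }
  intros j Hj. destruct (Hl j Hj) as [[|z l'] [_ [Hlen' Hz']]]; [simpl length in Hlen'; lia|].
  exists z. exact (Forall_inv Hz').
Qed.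

(* Each [Phi j] vanishes somewhere, so integrating back down from the oscillation of [Phi m]
   costs one factor [hi - lo] per step (mean value theorem). *)
Lemma deriv_chain_bound w :
  (forall j, (j <= m)%nat -> exists z, lo <= z <= hi /\ Phi j z = 0) ->
  osc_le (Phi m) lo hi w ->
  forall j x, (j <= m)%nat -> lo <= x <= hi -> Rabs (Phi j x) <= w * (hi - lo) ^ (m - j).
Proof.
  intros Hz Hw.
  assert (Hw0 : 0 <= w) by (destruct (Hz m (le_n m)) as [z [Hzi _]];
    specialize (Hw z z Hzi Hzi); rewrite Rminus_diag, Rabs_R0 in Hw; exact Hw).
  enough (H : forall k x, (k <= m)%nat -> lo <= x <= hi ->
                Rabs (Phi (m - k)%nat x) <= w * (hi - lo) ^ k).
  { intros j x Hj Hx. replace j with (m - (m - j))%nat at 1 by lia. apply H; [lia | exact Hx]. }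
  induction k as [|k IH]; intros x Hk Hx.
  - rewrite Nat.sub_0_r, Rmult_1_r. destruct (Hz m (le_n m)) as [z [Hzi Hz0]].
    rewrite <- (Rminus_0_r (Phi m x)), <- Hz0. now apply Hw.
  - destruct (Hz (m - S k)%nat ltac:(lia)) as [z [Hzi Hz0]].
    assert (HS : S (m - S k) = (m - k)%nat) by lia.
    destruct (MVT_gen (Phi (m - S k)%nat) z x (Phi (m - k)%nat)) as [c [Hc E]].
    + intros y _. rewrite <- HS. apply HPhi. lia.
    + intros y _. apply continuity_pt_filterlim, (@ex_derive_continuous R_AbsRing R_NormedModule).
      eexists. apply (HPhi (m - S k)%nat y). lia.
    + assert (Hci : lo <= c <= hi) by (revert Hc; unfold Rmin, Rmax; destruct Rle_dec; lra).
      rewrite Hz0, Rminus_0_r in E. rewrite E, Rabs_mult. simpl.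
      assert (Hxz : Rabs (x - z) <= hi - lo) by (apply Rabs_le; lra).
      pose proof (IH c ltac:(lia) Hci).
      pose proof (pow_le (hi - lo) k ltac:(lra)).
      replace (w * ((hi - lo) * (hi - lo) ^ k)) with (w * (hi - lo) ^ k * (hi - lo)) by ring.
      apply Rmult_le_compat; auto using Rabs_pos.
Qed.

End DerivativeChain.

Definition C1_close (f F : R -> R) (a b e e1 : R) : Prop :=
  forall x, a <= x <= b -> Rabs (f x - F x) <= e /\ Rabs (Derive f x - Derive F x) <= e1.

Lemma C1_close_mono f F a b a' b' e e' e1 e1' : a <= a' -> b' <= b -> e <= e' -> e1 <= e1' ->
  C1_close f F a b e e1 -> C1_close f F a' b' e' e1'.
Proof.
  intros Ha Hb He He1 H x Hx. destruct (H x ltac:(lra)). split; lra.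
Qed.

Section PolyApprox.

Variables (m : nat) (f p : R -> R).
Hypotheses (Hm : (0 < m)%nat) (Hf : Cm m f) (Hp : is_poly m p).

Lemma approx_error_is_derive_n j x : (j < m)%nat ->
  is_derive (fun t => Derive_n f j t - Derive_n p j t) x
            (Derive_n f (S j) x - Derive_n p (S j) x).
Proof.
  intros Hj. apply (is_derive_minus (Derive_n f j) (Derive_n p j)).
  - now apply (Cm_is_derive_n m).
  - now apply (is_poly_is_derive_n m).
Qed.

Lemma poly_approx_error lo hi w :
  (forall j, (j <= m)%nat -> exists z, lo <= z <= hi /\ Derive_n f j z = Derive_n p j z) ->
  osc_le (Derive_n f m) lo hi w ->
  C1_close f p lo hi (w * (hi - lo) ^ m) (w * (hi - lo) ^ (m - 1)).
Proof.
  intros Hz Hw.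
  set (Phi j t := Derive_n f j t - Derive_n p j t).
  assert (Hb : forall j x, (j <= m)%nat -> lo <= x <= hi ->
                 Rabs (Phi j x) <= w * (hi - lo) ^ (m - j)).
  { apply (deriv_chain_bound m Phi lo hi).
    - intros j t Hj. apply approx_error_is_derive_n, Hj.
    - intros j Hj. destruct (Hz j Hj) as [z [Hzi E]].
      exists z. split; [exact Hzi|]. unfold Phi. rewrite E. ring.
    - intros s t Hs Ht. unfold Phi. rewrite (is_poly_Derive_n_const m p Hp s t).
      replace (Derive_n f m s - Derive_n p m t - (Derive_n f m t - Derive_n p m t))
        with (Derive_n f m s - Derive_n f m t) by ring.
      now apply Hw. }
  intros x Hx. split.
  - pose proof (Hb O x (Nat.le_0_l m) Hx) as H0. now rewrite Nat.sub_0_r in H0.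
  - exact (Hb 1%nat x Hm Hx).
Qed.

End PolyApprox.

Lemma Taylor_approx_error m f a b w : (0 < m)%nat -> Cm m f -> a <= b ->
  osc_le (Derive_n f m) a b w ->
  C1_close f (Taylor m f a) a b (w * (b - a) ^ m) (w * (b - a) ^ (m - 1)).
Proof.
  intros Hm Hf Hab. apply poly_approx_error; auto using Taylor_is_poly.
  intros j Hj. exists a. split; [lra|]. now rewrite Derive_n_Taylor_center.
Qed.

Lemma interp_approx_error m f X lo hi w : (0 < m)%nat -> Cm m f ->
  NoDup X -> length X = S m -> (forall y, In y X -> lo <= y <= hi) ->
  osc_le (Derive_n f m) lo hi w ->
  C1_close f (Defs.interp m X f) lo hi (w * (hi - lo) ^ m) (w * (hi - lo) ^ (m - 1)).
Proof.
  intros Hm Hf HX Hlen HXI. apply poly_approx_error; auto using interp_is_poly.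
  destruct (NoDup_sorted_exists X HX) as [l [Hs [Hl Hincl]]].
  intros j Hj.
  destruct (deriv_chain_zeros m
              (fun j t => Derive_n f j t - Derive_n (Defs.interp m X f) j t)
              lo hi (approx_error_is_derive_n m f _ Hf (interp_is_poly m X f))
              l Hs ltac:(lia)) with j as [z [Hz E]]; [| exact Hj |].
  - apply Forall_forall. intros y Hy. split; [apply HXI, Hincl, Hy|].
    simpl. rewrite interp_agrees; auto. ring.
  - exists z. split; [exact Hz | lra].
Qed.

(** * The area integral *)

Lemma ex_RInt_C0 F a b : C0 F -> ex_RInt F a b.
Proof. intros HF. apply (@ex_RInt_continuous R_CompleteNormedModule). intros x _. apply HF. Qed.

Lemma RInt_abs_le_C0 F G a b : a <= b -> C0 F -> C0 G ->
  (forall x, a <= x <= b -> Rabs (F x) <= G x) -> Rabs (RInt F a b) <= RInt G a b.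
Proof.
  intros Hab HF HG H. eapply Rle_trans.
  - apply abs_RInt_le; [exact Hab | apply ex_RInt_C0, HF].
  - apply RInt_le; [exact Hab | | | intros x Hx; apply H; lra];
      apply ex_RInt_C0; [apply C0_abs, HF | apply HG].
Qed.

Lemma RInt_le_C0 F G a b : a <= b -> C0 F -> C0 G ->
  (forall x, a <= x <= b -> F x <= G x) -> RInt F a b <= RInt G a b.
Proof.
  intros Hab HF HG H. apply RInt_le; [exact Hab | | | intros x Hx; apply H; lra];
    apply ex_RInt_C0; [apply HF | apply HG].
Qed.

Lemma is_RInt_C0 F a b : C0 F -> is_RInt F a b (RInt F a b).
Proof. intros HF. apply (@RInt_correct R_CompleteNormedModule), ex_RInt_C0, HF. Qed.

Lemma RInt_scal_C0 F a b k : C0 F -> RInt (fun x => k * F x) a b = k * RInt F a b.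
Proof. intros HF. apply is_RInt_unique, (is_RInt_scal F), is_RInt_C0, HF. Qed.

Lemma RInt_const_R a b c : RInt (fun _ => c) a b = c * (b - a).
Proof. rewrite RInt_const. apply Rmult_comm. Qed.

Lemma Rabs_sub_mul_le A B u v e : Rabs u <= e -> Rabs v <= e ->
  Rabs (A * u - B * v) <= e * (Rabs A + Rabs B).
Proof.
  intros Hu Hv. unfold Rminus. eapply Rle_trans; [apply Rabs_triang|].
  rewrite Rabs_Ropp, !Rabs_mult.
  pose proof (Rabs_pos A). pose proof (Rabs_pos B). nra.
Qed.

Lemma Rabs_mult_le x y X Y : Rabs x <= X -> Rabs y <= Y -> Rabs (x * y) <= X * Y.
Proof. intros Hx Hy. rewrite Rabs_mult. apply Rmult_le_compat; auto using Rabs_pos. Qed.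

Definition cross_int (F G : R -> R) (a b : R) : R :=
  RInt (fun x => Derive F x * G x - Derive G x * F x) a b.

Definition tvar (F G : R -> R) (a b : R) : R :=
  RInt (fun x => Rabs (Derive F x) + Rabs (Derive G x)) a b.

Section CrossInt.

Variables F G f g : R -> R.
Hypotheses (HF : C1 F) (HG : C1 G) (Hf : C1 f) (Hg : C1 g).

Lemma cross_int_decomp a b :
  cross_int F G a b =
  cross_int f g a b
  - 2 * RInt (fun x => Derive F x * (g x - G x) - Derive G x * (f x - F x)) a b
  + (F b * (g b - G b) - F a * (g a - G a)) - (G b * (f b - F b) - G a * (f a - F a))
  - RInt (fun x => (Derive f x - Derive F x) * (g x - G x)
                   - (Derive g x - Derive G x) * (f x - F x)) a b.
Proof.
  assert (Hboundary : forall (P U V : R -> R), C1 P -> C1 U -> C1 V ->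
    is_RInt (fun x => Derive P x * (U x - V x) + P x * (Derive U x - Derive V x)) a b
            (P b * (U b - V b) - P a * (U a - V a))).
  { intros P U V HP HU HV.
    apply (is_RInt_derive (fun x => P x * (U x - V x))).
    - intros x _. apply (is_derive_mult P (fun x => U x - V x)); [apply C1_is_derive, HP | |
        intros; apply Rmult_comm].
      apply (is_derive_minus U V); apply C1_is_derive; assumption.
    - intros x _. apply (C0_plus (fun x => Derive P x * (U x - V x))); C0_tac. }
  pose proof (is_RInt_C0 (fun x => Derive f x * g x - Derive g x * f x) a b
                ltac:(C0_tac)) as Ifg.
  pose proof (is_RInt_C0 (fun x => Derive F x * (g x - G x) - Derive G x * (f x - F x)) a b
                ltac:(C0_tac)) as IJ.
  pose proof (is_RInt_C0 (fun x => (Derive f x - Derive F x) * (g x - G x)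
                                   - (Derive g x - Derive G x) * (f x - F x)) a b
                ltac:(C0_tac)) as IK.
  pose proof (Hboundary F g G HF Hg HG) as IFg.
  pose proof (Hboundary G f F HG Hf HF) as IGf.
  unfold cross_int at 1. apply is_RInt_unique.
  eapply is_RInt_ext; [|apply (is_RInt_minus _ _ _ _ _ _
    (is_RInt_minus _ _ _ _ _ _
      (is_RInt_plus _ _ _ _ _ _
        (is_RInt_minus _ _ _ _ _ _ Ifg (is_RInt_scal _ _ _ 2 _ IJ)) IFg) IGf) IK)].
  intros x _. unfold minus, plus, opp, scal; simpl; unfold mult; simpl. ring.
Qed.

Lemma cross_int_approx a b e e1 : a <= b ->
  C1_close f F a b e e1 -> C1_close g G a b e e1 ->
  Rabs (cross_int F G a b - cross_int f g a b
        - (F b * (g b - G b) - F a * (g a - G a)) + (G b * (f b - F b) - G a * (f a - F a)))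
  <= 2 * e * tvar F G a b + 2 * e1 * e * (b - a).
Proof.
  intros Hab HfF HgG. rewrite cross_int_decomp.
  set (J := RInt (fun x => Derive F x * (g x - G x) - Derive G x * (f x - F x)) a b).
  set (K := RInt (fun x => (Derive f x - Derive F x) * (g x - G x)
                           - (Derive g x - Derive G x) * (f x - F x)) a b).
  assert (HJ : Rabs J <= e * tvar F G a b).
  { unfold tvar. rewrite <- RInt_scal_C0 by C0_tac.
    apply RInt_abs_le_C0; [exact Hab | C0_tac | C0_tac |].
    intros x Hx. apply Rabs_sub_mul_le; [apply HgG, Hx | apply HfF, Hx]. }
  assert (HK : Rabs K <= 2 * e1 * e * (b - a)).
  { rewrite <- RInt_const_R.
    apply RInt_abs_le_C0; [exact Hab | C0_tac | C0_tac |].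
    intros x Hx. destruct (HfF x Hx), (HgG x Hx).
    eapply Rle_trans; [apply Rabs_sub_mul_le; eassumption|].
    assert (0 <= e) by (eapply Rle_trans; [apply Rabs_pos | eassumption]).
    pose proof (Rabs_pos (Derive f x - Derive F x)).
    nra. }
  apply Rabs_le_between in HJ, HK. apply Rabs_le. lra.
Qed.

End CrossInt.

Lemma tvar_nonneg F G a b : a <= b -> C1 F -> C1 G -> 0 <= tvar F G a b.
Proof.
  intros Hab HF HG. apply RInt_ge_0; [exact Hab | |].
  - apply ex_RInt_C0. C0_tac.
  - intros x _. pose proof (Rabs_pos (Derive F x)). pose proof (Rabs_pos (Derive G x)). lra.
Qed.

Lemma Rabs_sub_le_tvar F G a b : a <= b -> C1 F -> C1 G ->
  Rabs (F b - F a) <= tvar F G a b /\ Rabs (G b - G a) <= tvar F G a b.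
Proof.
  intros Hab HF HG.
  assert (H : forall P, C1 P -> (forall x, Rabs (Derive P x) <=
                 Rabs (Derive F x) + Rabs (Derive G x)) -> Rabs (P b - P a) <= tvar F G a b).
  { intros P HP HPle. rewrite <- (RInt_Derive P a b).
    - apply RInt_abs_le_C0; [exact Hab | C0_tac | C0_tac | intros x _; apply HPle].
    - intros x _. apply HP.
    - intros x _. apply HP. }
  split; apply H; auto; intros x;
    pose proof (Rabs_pos (Derive F x)); pose proof (Rabs_pos (Derive G x)); lra.
Qed.

Lemma tvar_compare f g F1 G1 F2 G2 a b e1 e2 d1 d2 :
  a <= b -> C1 F1 -> C1 G1 -> C1 F2 -> C1 G2 ->
  C1_close f F1 a b e1 d1 -> C1_close g G1 a b e1 d1 ->
  C1_close f F2 a b e2 d2 -> C1_close g G2 a b e2 d2 ->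
  tvar F1 G1 a b <= tvar F2 G2 a b + 2 * (d1 + d2) * (b - a).
Proof.
  intros Hab HF1 HG1 HF2 HG2 Hf1 Hg1 Hf2 Hg2. unfold tvar.
  rewrite <- RInt_const_R.
  replace (RInt _ a b + RInt _ a b) with
    (RInt (fun x => Rabs (Derive F2 x) + Rabs (Derive G2 x) + 2 * (d1 + d2)) a b)
    by (apply is_RInt_unique, (is_RInt_plus (fun x => _ + _) (fun _ => _));
        apply is_RInt_C0; C0_tac).
  apply RInt_le_C0; [exact Hab | C0_tac | C0_tac |].
  intros x Hx.
  destruct (Hf1 x Hx) as [_ HF1'], (Hg1 x Hx) as [_ HG1'],
           (Hf2 x Hx) as [_ HF2'], (Hg2 x Hx) as [_ HG2'].
  apply Rabs_le_between in HF1', HG1', HF2', HG2'.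
  assert (Rabs (Derive F1 x - Derive F2 x) <= d1 + d2) by (apply Rabs_le; lra).
  assert (Rabs (Derive G1 x - Derive G2 x) <= d1 + d2) by (apply Rabs_le; lra).
  pose proof (Rabs_triang_inv (Derive F1 x) (Derive F2 x)).
  pose proof (Rabs_triang_inv (Derive G1 x) (Derive G2 x)). lra.
Qed.

Definition A_exact (f g h : R -> R) (a b : R) : R := h b - h a - 2 * cross_int f g a b.

Lemma Acont_approx m f g h a b e e1 : (0 < m)%nat -> Cm m f -> Cm m g -> a <= b ->
  C1_close f (Taylor m f a) a b e e1 -> C1_close g (Taylor m g a) a b e e1 ->
  Rabs (Acont m f g h a b - A_exact f g h a b)
  <= 8 * e * tvar (Taylor m f a) (Taylor m g a) a b + 4 * e1 * e * (b - a).
Proof.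
  intros Hm Hf Hg Hab Hef Heg.
  assert (HTf := is_poly_C1 m _ (Taylor_is_poly m f a) Hm).
  assert (HTg := is_poly_C1 m _ (Taylor_is_poly m g a) Hm).
  assert (HR := cross_int_approx _ _ f g HTf HTg (Cm_C1 m f Hm Hf) (Cm_C1 m g Hm Hg)
                  a b e e1 Hab Hef Heg).
  destruct (Rabs_sub_le_tvar _ _ a b Hab HTf HTg) as [HTfb HTgb].
  rewrite (Taylor_center m f a), (Taylor_center m g a) in HR.
  rewrite (Taylor_center m f a) in HTfb. rewrite (Taylor_center m g a) in HTgb.
  destruct (Hef b ltac:(lra)) as [Hfb _], (Heg b ltac:(lra)) as [Hgb _].
  pose proof (Rabs_mult_le _ _ _ _ HTfb Hgb) as HFg.
  pose proof (Rabs_mult_le _ _ _ _ HTgb Hfb) as HGf.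
  change (Acont m f g h a b) with
    (h b - h a - 2 * cross_int (Taylor m f a) (Taylor m g a) a b
     + 2 * f a * (g b - Taylor m g a b) - 2 * g a * (f b - Taylor m f a b)).
  unfold A_exact. apply Rabs_le_between in HR, HFg, HGf. apply Rabs_le. lra.
Qed.

Lemma Adisc_approx m X f g h a b e e1 : (0 < m)%nat -> Cm m f -> Cm m g ->
  NoDup X -> length X = S m -> In a X -> In b X -> a <= b ->
  C1_close f (Defs.interp m X f) a b e e1 -> C1_close g (Defs.interp m X g) a b e e1 ->
  Rabs (Adisc m X f g h a b - A_exact f g h a b)
  <= 4 * e * tvar (Defs.interp m X f) (Defs.interp m X g) a b + 4 * e1 * e * (b - a).
Proof.
  intros Hm Hf Hg HX Hlen Ha Hb Hab Hef Heg.
  assert (HR := cross_int_approx _ _ f g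
                  (is_poly_C1 m _ (interp_is_poly m X f) Hm)
                  (is_poly_C1 m _ (interp_is_poly m X g) Hm)
                  (Cm_C1 m f Hm Hf) (Cm_C1 m g Hm Hg) a b e e1 Hab Hef Heg).
  rewrite !(interp_agrees m X f HX Hlen a Ha), !(interp_agrees m X f HX Hlen b Hb),
          !(interp_agrees m X g HX Hlen a Ha), !(interp_agrees m X g HX Hlen b Hb) in HR.
  change (Adisc m X f g h a b) with
    (h b - h a - 2 * cross_int (Defs.interp m X f) (Defs.interp m X g) a b).
  unfold A_exact. apply Rabs_le_between in HR. apply Rabs_le. lra.
Qed.

(** * Comparison of the two quotients *)

Lemma fold_right_Rmax_ge (l : list R) v : In v l -> v <= fold_right Rmax 0 l.
Proof.
  induction l as [|y l IH]; simpl; [tauto|].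
  intros [->|Hv]; [apply Rmax_l | eapply Rle_trans; [apply IH, Hv | apply Rmax_r]].
Qed.

Lemma diam_ge X x y : In x X -> In y X -> Rabs (x - y) <= diam X.
Proof.
  intros Hx Hy. unfold diam. eapply Rle_trans; [|apply fold_right_Rmax_ge, in_map, Hx].
  apply fold_right_Rmax_ge, (in_map (fun z => Rabs (x - z))), Hy.
Qed.

Lemma diam_ge_sub X a b : In a X -> In b X -> a <= b -> b - a <= diam X.
Proof. intros Ha Hb Hab. rewrite <- (Rabs_pos_eq (b - a)) by lra. now apply diam_ge. Qed.

Lemma pow_pred_mult x m : (0 < m)%nat -> x ^ (m - 1) * x = x ^ m.
Proof. intros Hm. replace m with (S (m - 1)) at 2 by lia. simpl. ring. Qed.

Lemma AV_compare_arith w M p q QT QP E dA :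
  0 <= w <= 1 -> 1 <= M -> 0 <= q <= p -> 0 <= QT -> 0 <= QP -> E = w * M * p ->
  QT <= QP + 4 * E -> Rabs dA <= 8 * E * QT + 4 * E * QP + 8 * E * E ->
  q * q + q * QT <= (1 + 4 * M) * (p * p + p * QP) /\
  Rabs dA <= 40 * M * M * w * (p * p + p * QP).
Proof.
  intros Hw HM Hq HQT HQP HE HQ HdA.
  assert (Hp : 0 <= p) by lra.
  assert (HE0 : 0 <= E) by (rewrite HE; apply Rmult_le_pos; [apply Rmult_le_pos|]; lra).
  assert (HEQT := Rmult_le_compat_l _ _ _ HE0 HQ).
  assert (HEE : E * E <= M * M * w * (p * p)).
  { rewrite HE. assert (0 <= M * M * (p * p)) by nra.
    replace (w * M * p * (w * M * p)) with ((w * w) * (M * M * (p * p))) by ring.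
    replace (M * M * w * (p * p)) with (w * (M * M * (p * p))) by ring.
    apply Rmult_le_compat_r; nra. }
  assert (HEQP : E * QP <= M * M * w * (p * QP)).
  { rewrite HE. replace (M * M * w * (p * QP)) with (M * (w * M * p * QP)) by ring.
    assert (0 <= w * M * p * QP) by (rewrite <- HE; nra).
    nra. }
  assert (HpQP : 0 <= p * QP) by nra.
  split.
  - assert (q * q <= p * p) by nra.
    assert (q * QT <= p * QT) by nra.
    assert (p * QT <= p * QP + 4 * M * (p * p)).
    { assert (HMpp : 0 <= M * (p * p)) by nra.
      assert (p * E <= M * (p * p)).
      { rewrite HE. replace (p * (w * M * p)) with (w * (M * (p * p))) by ring. nra. }
      nra. }
    nra.
  - assert (0 <= M * M * w) by nra.
    nra.
Qed.

Lemma pow_double x m : x ^ (2 * m) = x ^ m * x ^ m.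
Proof. rewrite Nat.mul_comm, pow_mult. simpl. ring. Qed.

Lemma diam_C1_close m f X a b w : (0 < m)%nat -> Cm m f ->
  NoDup X -> length X = S m -> In a X -> In b X -> a < b -> 0 <= w ->
  osc_le (Derive_n f m) (a - diam X) (a + diam X) w ->
  C1_close f (Taylor m f a) a b (w * (2 * diam X) ^ m) (w * (2 * diam X) ^ m / (b - a)) /\
  C1_close f (Defs.interp m X f) a b (w * (2 * diam X) ^ m) (w * (2 * diam X) ^ m / (b - a)).
Proof.
  intros Hm Hf HX Hlen Ha Hb Hab Hw Hosc.
  set (D := diam X) in *.
  assert (HbD : b - a <= D) by (apply diam_ge_sub; auto; lra).
  assert (HXD : forall y, In y X -> a - D <= y <= a + D).
  { intros y Hy. apply Rabs_le_between', (diam_ge X y a Hy Ha). }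
  assert (Hbm : w * (b - a) ^ m <= w * (2 * D) ^ m)
    by (apply Rmult_le_compat_l; [lra | apply pow_incr; lra]).
  assert (Hba : b - a > 0) by lra.
  split.
  - apply (C1_close_mono _ _ a b a b (w * (b - a) ^ m) _ (w * (b - a) ^ (m - 1)));
      [lra | lra | exact Hbm | |].
    + apply (Rle_div_r _ _ _ Hba). rewrite Rmult_assoc, (pow_pred_mult _ _ Hm). exact Hbm.
    + apply Taylor_approx_error; auto; [lra|].
      apply (osc_le_sub _ (a - D) (a + D)); [lra | lra | exact Hosc].
  - apply (C1_close_mono _ _ (a - D) (a + D) a b
             (w * (2 * D) ^ m) _ (w * (2 * D) ^ (m - 1))); [lra | lra | lra | |].
    + apply (Rle_div_r _ _ _ Hba).
      rewrite <- (pow_pred_mult (2 * D) m Hm), <- Rmult_assoc.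
      apply Rmult_le_compat_l; [apply Rmult_le_pos; [lra | apply pow_le; lra] | lra].
    + replace (2 * D) with (a + D - (a - D)) by ring.
      apply interp_approx_error; auto.
Qed.

Lemma AV_compare m f g h X a b w : (0 < m)%nat -> Cm m f -> Cm m g ->
  NoDup X -> length X = S m -> In a X -> In b X -> a < b -> 0 <= w <= 1 ->
  osc_le (Derive_n f m) (a - diam X) (a + diam X) w ->
  osc_le (Derive_n g m) (a - diam X) (a + diam X) w ->
  0 < Vcont m f g a b /\ 0 < Vdisc m X f g a b /\
  Vcont m f g a b <= (1 + 4 * 2 ^ m) * Vdisc m X f g a b /\
  Rabs (Acont m f g h a b - Adisc m X f g h a b)
    <= 40 * 2 ^ m * 2 ^ m * w * Vdisc m X f g a b.
Proof.
  intros Hm Hf Hg HX Hlen Ha Hb Hab Hw Hoscf Hoscg.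
  destruct (diam_C1_close m f X a b w Hm Hf HX Hlen Ha Hb Hab ltac:(lra) Hoscf) as [HTf HPf].
  destruct (diam_C1_close m g X a b w Hm Hg HX Hlen Ha Hb Hab ltac:(lra) Hoscg) as [HTg HPg].
  set (D := diam X) in *.
  set (E := w * (2 * D) ^ m) in *.
  assert (HbD : b - a <= D) by (apply diam_ge_sub; auto; lra).
  assert (HE0 : 0 <= E) by (apply Rmult_le_pos; [lra | apply pow_le; lra]).
  assert (HA := Acont_approx m f g h a b _ _ Hm Hf Hg ltac:(lra) HTf HTg).
  assert (HAd := Adisc_approx m X f g h a b _ _ Hm Hf Hg HX Hlen Ha Hb ltac:(lra) HPf HPg).
  assert (C1Tf := is_poly_C1 m _ (Taylor_is_poly m f a) Hm).
  assert (C1Tg := is_poly_C1 m _ (Taylor_is_poly m g a) Hm).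
  assert (C1Pf := is_poly_C1 m _ (interp_is_poly m X f) Hm).
  assert (C1Pg := is_poly_C1 m _ (interp_is_poly m X g) Hm).
  assert (HQ := tvar_compare f g _ _ _ _ a b _ _ _ _ ltac:(lra) C1Tf C1Tg C1Pf C1Pg
                  HTf HTg HPf HPg).
  replace (2 * (E / (b - a) + E / (b - a)) * (b - a)) with (4 * E) in HQ by (field; lra).
  replace (4 * (E / (b - a)) * E * (b - a)) with (4 * E * E) in HA, HAd by (field; lra).
  set (QT := tvar (Taylor m f a) (Taylor m g a) a b) in *.
  set (QP := tvar (Defs.interp m X f) (Defs.interp m X g) a b) in *.
  assert (HQT : 0 <= QT) by (apply tvar_nonneg; auto; lra).
  assert (HQP : 0 <= QP) by (apply tvar_nonneg; auto; lra).
  destruct (AV_compare_arith w (2 ^ m) (D ^ m) ((b - a) ^ m) QT QP E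
              (Acont m f g h a b - Adisc m X f g h a b)) as [HV HdA]; auto.
  - apply pow_R1_Rle. lra.
  - split; [apply pow_le | apply pow_incr]; lra.
  - unfold E. rewrite Rpow_mult_distr. ring.
  - apply Rabs_le_between in HA, HAd. apply Rabs_le. lra.
  - assert (Hbm : 0 < (b - a) ^ m) by (apply pow_lt; lra).
    assert (HDm : 0 < D ^ m) by (apply pow_lt; lra).
    change (Vcont m f g a b) with ((b - a) ^ (2 * m) + (b - a) ^ m * QT).
    change (Vdisc m X f g a b) with (D ^ (2 * m) + D ^ m * QP).
    rewrite !pow_double. repeat split; nra.
Qed.

Lemma Rabs_ratio_diff_le A Ad V Vd C e : 0 < V -> 0 < Vd -> V <= C * Vd ->
  Rabs (A - Ad) <= e * Vd -> Rabs (A / V - Ad / Vd) <= Rabs (A / V) * (1 + C) + e.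
Proof.
  intros HV HVd HC He.
  replace (A / V - Ad / Vd) with (A / V - A / V * (V / Vd) + (A - Ad) / Vd) by (field; lra).
  assert (HVV : 0 < V / Vd <= C).
  { split; [apply Rdiv_lt_0_compat; lra|]. apply Rmult_le_reg_r with Vd; [lra|].
    field_simplify; lra. }
  assert (HAd : Rabs ((A - Ad) / Vd) <= e).
  { rewrite Rabs_div, (Rabs_pos_eq Vd) by lra.
    apply Rmult_le_reg_r with Vd; [lra|]. field_simplify; lra. }
  pose proof (Rabs_triang (A / V - A / V * (V / Vd)) ((A - Ad) / Vd)).
  pose proof (Rabs_triang (A / V) (- (A / V * (V / Vd)))).
  rewrite Rabs_Ropp, Rabs_mult, (Rabs_pos_eq (V / Vd)) in * by lra.
  pose proof (Rabs_pos (A / V)). unfold Rminus in *. nra.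
Qed.

Lemma Cm_osc_small m f K : Cm m f -> Rtopology.compact K ->
  forall w, 0 < w -> exists d, 0 < d /\
    forall a D, K a -> 0 <= D < d -> osc_le (Derive_n f m) (a - D) (a + D) w.
Proof.
  intros [_ [Hc _]] HK w Hw.
  destruct (compact_P1 K HK) as [lo [hi HKb]].
  destruct (Heine (Derive_n f m) (fun c => lo - 1 <= c <= hi + 1) (compact_P3 _ _)
              (fun x _ => proj2 (continuity_pt_filterlim _ _) (Hc m x (le_n m)))
              (mkposreal w Hw)) as [d Hd].
  pose proof (cond_pos d).
  exists (Rmin 1 (d / 2)). split; [apply Rmin_pos; lra|].
  intros a D Ha [HD0 HD] x y Hx Hy.
  pose proof (HKb a Ha). pose proof (Rmin_l 1 (d / 2)). pose proof (Rmin_r 1 (d / 2)).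
  left. apply Hd; simpl; [lra | lra |].
  apply Rle_lt_trans with (2 * D); [apply Rabs_le_between'; lra | lra].
Qed.

Lemma AV_ratios_close m f g h K : (0 < m)%nat -> Cm m f -> Cm m g ->
  Rtopology.compact K -> AV_condition m f g h K ->
  forall eps, 0 < eps -> exists delta, 0 < delta /\
    forall X : list R, NoDup X -> length X = S m -> List.Forall K X -> diam X < delta ->
      forall a b, In a X -> In b X -> a < b ->
        Rabs (Acont m f g h a b / Vcont m f g a b
              - Adisc m X f g h a b / Vdisc m X f g a b) < eps.
Proof.
  intros Hm Hf Hg HK HAV eps Heps.
  set (M := 2 ^ m).
  assert (HM : 1 <= M) by (apply pow_R1_Rle; lra).
  set (w := Rmin 1 (eps / (80 * M * M))).
  assert (Hw : 0 < w <= 1).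
  { split; [apply Rmin_pos; [lra | apply Rdiv_lt_0_compat; nra] | apply Rmin_l]. }
  assert (HwM : 40 * M * M * w <= eps / 2).
  { apply Rle_trans with (40 * M * M * (eps / (80 * M * M))).
    - apply Rmult_le_compat_l; [nra | apply Rmin_r].
    - right. field. nra. }
  destruct (Cm_osc_small m f K Hf HK w ltac:(lra)) as [df [Hdf Hoscf]].
  destruct (Cm_osc_small m g K Hg HK w ltac:(lra)) as [dg [Hdg Hoscg]].
  set (eA := eps / (2 * (2 + 4 * M))).
  destruct (HAV eA ltac:(unfold eA; apply Rdiv_lt_0_compat; lra)) as [dA [HdA HA]].
  exists (Rmin dA (Rmin df dg)). split; [repeat apply Rmin_pos; lra|].
  intros X HX Hlen HKX HD a b Ha Hb Hab.
  rewrite Forall_forall in HKX.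
  pose proof (Rmin_l dA (Rmin df dg)). pose proof (Rmin_r dA (Rmin df dg)).
  pose proof (Rmin_l df dg). pose proof (Rmin_r df dg).
  assert (HbD : b - a <= diam X) by (apply diam_ge_sub; auto; lra).
  destruct (AV_compare m f g h X a b w Hm Hf Hg HX Hlen Ha Hb Hab ltac:(lra)
              (Hoscf a (diam X) (HKX a Ha) ltac:(lra)) (Hoscg a (diam X) (HKX a Ha) ltac:(lra)))
    as [HV [HVd [HVV HdA']]].
  assert (HAab : Rabs (Acont m f g h a b / Vcont m f g a b) < eA)
    by (apply HA; auto; lra).
  eapply Rle_lt_trans; [apply (Rabs_ratio_diff_le _ _ _ _ _ _ HV HVd HVV HdA')|].
  fold M.
  assert (Rabs (Acont m f g h a b / Vcont m f g a b) * (1 + (1 + 4 * M)) < eps / 2).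
  { replace (eps / 2) with (eA * (2 + 4 * M)) by (unfold eA; field; lra).
    replace (1 + (1 + 4 * M)) with (2 + 4 * M) by ring.
    apply Rmult_lt_compat_r; lra. }
  lra.
Qed.

Theorem lemma4p4 (m : nat) (f g h : R -> R) (K : R -> Prop) :
  (0 < m)%nat ->
  Cm m f -> Cm m g -> Cm m h ->
  Rtopology.compact K ->
  (exists l : list R, NoDup l /\ length l = S m /\ List.Forall K l) ->
  AV_condition m f g h K ->
  (forall eps, 0 < eps -> exists delta, 0 < delta /\
    forall X : list R, NoDup X -> length X = S m -> List.Forall K X -> diam X < delta ->
      forall a b, List.In a X -> List.In b X -> a < b ->
        Rabs (Acont m f g h a b / Vcont m f g a b
              - Adisc m X f g h a b / Vdisc m X f g a b) < eps)
  /\ discrete_AV_condition m f g h K.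
Proof.
  intros Hm Hf Hg _ HK _ HAV.
  assert (Hclose := AV_ratios_close m f g h K Hm Hf Hg HK HAV).
  split; [exact Hclose|].
  intros eps Heps.
  destruct (Hclose (eps / 2) ltac:(lra)) as [d1 [Hd1 H1]].
  destruct (HAV (eps / 2) ltac:(lra)) as [d2 [Hd2 H2]].
  exists (Rmin d1 d2). split; [apply Rmin_pos; lra|].
  intros X HX Hlen HKX HD a b Ha Hb Hab.
  assert (HbD : b - a <= diam X) by (apply diam_ge_sub; auto; lra).
  pose proof (Rmin_l d1 d2). pose proof (Rmin_r d1 d2).
  specialize (H1 X HX Hlen HKX ltac:(lra) a b Ha Hb Hab).
  rewrite Forall_forall in HKX.
  specialize (H2 a b (HKX a Ha) (HKX b Hb) ltac:(lra)).
  apply Rabs_def2 in H1, H2. apply Rabs_def1; lra.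
Qed.
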